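(* Let $\mathcal I$ be an ideal on $\omega$. (1) There is $X\subseteq\omega^\omega$ (with the subspace topology of the Baire space) such that $|X|=\mathrm{non}(\mathcal I\text{-p},\mathcal I\text{-}\sigma\text{-u})$ and $X\notin(\mathcal I\text{-p},\mathcal I\text{-}\sigma\text{-u})$. (2) If $\mathcal I$ is not countably generated, then there is $X\subseteq2^\omega$ (with the subspace topology of the Cantor space) such that $|X|=\mathrm{non}(\mathcal I\text{-qn},\mathcal I\text{-}\sigma\text{-u})$ and $X\notin(\mathcal I\text{-qn},\mathcal I\text{-}\sigma\text{-u})$. (3) There is $X\subseteq\omega^\omega$ such that $|X|=\mathrm{non}(\mathcal I\text{-p},\mathcal I\text{-qn})$ and $X\notin(\mathcal I\text{-p},\mathcal I\text{-qn})$.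
   Context: An ideal on $\omega$ is a family $\mathcal I\subseteq\mathcal P(\omega)$ closed under finite unions and subsets, containing all finite sets, with $\omega\notin\mathcal I$; it is countably generated if there is a countable $\mathcal B\subseteq\mathcal I$ such that every $A\in\mathcal I$ is contained in some $B\in\mathcal B$. A real sequence $(a_n)$ is $\mathcal I$-convergent to $0$ if $\{n:|a_n|\ge\varepsilon\}\in\mathcal I$ for all $\varepsilon>0$. For a sequence $(f_n)$ of real functions on a set $X$: $\mathcal I$-p means $(f_n(x))$ is $\mathcal I$-convergent to $0$ for each $x$; $\mathcal I$-u means $\{n:\exists x\in X\,(|f_n(x)|\ge\varepsilon)\}\in\mathcal I$ for each $\varepsilon>0$; $\mathcal I$-$\sigma$-u means $X=\bigcup_{k\in\omega}X_k$ with $(f_n\restriction X_k)$ $\mathcal I$-u convergent to $0$ for each $k$; $\mathcal I$-qn means there is a sequence $(\varepsilon_n)$ of positive reals $\mathcal I$-convergent to $0$ with $\{n:|f_n(x)|\ge\varepsilon_n\}\in\mathcal I$ for each $x$. $\mathcal C(X)$ = continuous real functions on $X$. Normal space = Hausdorff space in which disjoint closed sets have disjoint open neighbourhoods. $(\alpha,\beta)$ is the class of normal spaces $X$ such that for all sequences $(f_n)$ in $\mathcal C(X)$, $f_n\to0$ in sense $\alpha$ iff in sense $\beta$; $\mathrm{non}(\alpha,\beta)$ is the least cardinality of a normal space not in $(\alpha,\beta)$, or $\infty$ if none. *)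

From HB Require Import structures.
From mathcomp Require Import all_boot all_order all_algebra.
From mathcomp Require Import all_classical all_reals all_analysis.
From mathcomp Require Import Rstruct Rstruct_topology.

Set Implicit Arguments.
Unset Strict Implicit.
Unset Printing Implicit Defensive.

Import Order.TTheory GRing.Theory Num.Theory.
Local Open Scope classical_set_scope.
Local Open Scope ring_scope.

Notation RR := Rdefinitions.R.

Definition is_ideal (I : set (set nat)) : Prop :=
  (forall A B, I A -> I B -> I (A `|` B)) /\
  (forall A B, B `<=` A -> I A -> I B) /\
  (forall A : set nat, finite_set A -> I A) /\
  ~ I setT.

Definition countably_generated (I : set (set nat)) : Prop :=
  exists B : nat -> set nat, (forall k, I (B k)) /\
    forall A, I A -> exists k, A `<=` B k.

Definition Iconv0 (I : set (set nat)) (a : nat -> RR) : Prop :=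
  forall eps : RR, 0 < eps -> I [set n | eps <= `|a n|].

Definition I_p (I : set (set nat)) (X : Type) (f : nat -> X -> RR) : Prop :=
  forall x, Iconv0 I (fun n => f n x).

Definition I_u_on (I : set (set nat)) (X : Type) (A : set X)
  (f : nat -> X -> RR) : Prop :=
  forall eps : RR, 0 < eps -> I [set n | exists2 x, A x & eps <= `|f n x|].

Definition I_u (I : set (set nat)) (X : Type) (f : nat -> X -> RR) : Prop :=
  I_u_on I setT f.

Definition I_sigma_u (I : set (set nat)) (X : Type) (f : nat -> X -> RR) : Prop :=
  exists Xk : nat -> set X, setT = \bigcup_k Xk k /\ forall k, I_u_on I (Xk k) f.

Definition I_qn (I : set (set nat)) (X : Type) (f : nat -> X -> RR) : Prop :=
  exists eps : nat -> RR, (forall n, 0 < eps n) /\ Iconv0 I eps /\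
    forall x, I [set n | eps n <= `|f n x|].

Definition normal_sp (X : topologicalType) : Prop :=
  hausdorff_space X /\
  forall A B : set X, closed A -> closed B -> A `&` B = set0 ->
    exists U V : set X, [/\ open U, open V, A `<=` U, B `<=` V & U `&` V = set0].

Definition conv_mode := forall X : Type, (nat -> X -> RR) -> Prop.

Definition in_class (alpha beta : conv_mode) (X : topologicalType) : Prop :=
  normal_sp X /\
  forall f : nat -> X -> RR, (forall n, continuous (f n)) ->
    (alpha X f <-> beta X f).

Definition realizes_non (alpha beta : conv_mode) (X : topologicalType) : Prop :=
  normal_sp X /\ ~ in_class alpha beta X /\
  forall Y : topologicalType, normal_sp Y -> ~ in_class alpha beta Y ->
    exists g : X -> Y, injective g.

(** Baire space omega^omega = nat -> nat (product topology of discrete nat);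
    Cantor space 2^omega = cantor_space (product of discrete bool). *)
Definition baire_space : Type := prod_topology (fun _ : nat => nat).
HB.instance Definition _ := Pointed.on baire_space.
HB.instance Definition _ := Nbhs.on baire_space.
HB.instance Definition _ := Topological.on baire_space.

Definition baire_sub (A : set baire_space) : topologicalType := set_type A.
Definition cantor_sub (A : set cantor_space) : topologicalType := set_type A.

Definition mode_p (I : set (set nat)) : conv_mode := fun X f => @I_p I X f.
Definition mode_sigma_u (I : set (set nat)) : conv_mode := fun X f => @I_sigma_u I X f.
Definition mode_qn (I : set (set nat)) : conv_mode := fun X f => @I_qn I X f.

(* For a sequence (f_n) of real functions on an arbitrary set Y, put a point of
   2^omega (more generally of T^omega, T discrete with two points) over each y:
   coordinate (n, k), k <= n, records whether |f_n y| >= 1/(k+1).  Reading only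
   these coordinates gives continuous functions g_n on the image X whose value
   lies between min(|f_n y|, 1)/2 and |f_n y| as soon as |f_n y| >= 1/(n+1);
   this is enough for (f_n) and (g_n) to have the same I-p, I-qn and I-sigma-u
   behaviour, and |X| <= |Y|.  Subspaces of T^omega are metrizable, hence
   normal, so a subspace of minimal cardinality among those outside the class
   (a Zorn argument provides one) realizes non(alpha, beta).  Witnesses that
   such subspaces exist: the I-divergent x in omega^omega with
   f_n x = 1/(x_n + 1) (I-p but neither I-sigma-u nor I-qn), and, when I is not
   countably generated, the indicators of members of I with f_n x = x_n (I-qn
   but not I-sigma-u, since the sets {n | f_n = 1 somewhere on X_k} would
   generate I). *)

From HB Require Import structures.
From mathcomp Require Import all_boot all_order all_algebra.
From mathcomp Require Import all_classical all_reals all_analysis.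
From mathcomp Require Import Rstruct Rstruct_topology.
From mathcomp Require Import zify lra.

Set Implicit Arguments.
Unset Strict Implicit.
Unset Printing Implicit Defensive.

Import Order.TTheory GRing.Theory Num.Theory.
Local Open Scope classical_set_scope.
Local Open Scope ring_scope.

Lemma lt_truncn_inv (e : RR) n : 0 < e -> e <= n.+1%:R^-1 -> (n < Num.truncn e^-1)%N.
Proof.
by move=> e0 en; rewrite truncn_gt_nat -[_.+1%:R]invrK lef_pV2 ?posrE ?invr_gt0 ?ltr0n.
Qed.

Section Ideal.
Variable I : set (set nat).
Hypothesis hI : is_ideal I.

Lemma idealU (A B : set nat) : I A -> I B -> I (A `|` B).
Proof. by case: hI => h _; apply: h. Qed.

Lemma idealS (A B : set nat) : B `<=` A -> I A -> I B.
Proof. by case: hI => _ [h _] BA /h; apply. Qed.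

Lemma ideal_finite (A : set nat) : finite_set A -> I A.
Proof. by case: hI => _ [_ [h _]]; apply: h. Qed.

Lemma idealNT : ~ I setT.
Proof. by case: hI => _ [_ [_ h]]. Qed.

Lemma ideal_le_inv_succ (e : RR) : 0 < e -> I [set n | e <= n.+1%:R^-1].
Proof.
move=> e0; apply: ideal_finite; apply: sub_finite_set (finite_II (Num.truncn e^-1)).
by move=> n; apply: lt_truncn_inv.
Qed.

Lemma ideal_avoid_seq (B : nat -> set nat) : (forall k, I (B k)) ->
  exists m : nat -> nat, forall k, (k <= m k)%N /\ ~ B k (m k).
Proof.
move=> IB; suff /choice[m hm] : forall k, exists n, (k <= n)%N /\ ~ B k n by exists m.
move=> k; apply: contrapT => /forallNP Bk; apply: idealNT.
apply: idealS (idealU (IB k) (ideal_finite (finite_II k))) => n _ /=.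
by case: (ltnP n k) => [|kn]; [right|left; apply: contrapT => /(conj kn)/Bk].
Qed.

Section Comparison.
Variables (Y S : Type) (f : nat -> Y -> RR) (g : nat -> S -> RR) (c : Y -> S).
Hypothesis c_surj : forall a, exists y, c y = a.
Hypothesis g_ge0 : forall n y, 0 <= g n (c y).
Hypothesis g_le : forall n y, g n (c y) <= `|f n y|.
Hypothesis g_ge : forall n y, n.+1%:R^-1 <= `|f n y| -> Num.min `|f n y| 1 <= 2 * g n (c y).

Let normg n y : `|g n (c y)| = g n (c y).
Proof. exact/ger0_norm/g_ge0. Qed.

Let g_le_f n y e : e <= `|g n (c y)| -> e <= `|f n y|.
Proof. by rewrite normg => /le_trans; apply. Qed.

Let f_le_g n y e : e <= `|f n y| ->
  Num.min e 1 / 2 <= `|g n (c y)| \/ e <= n.+1%:R^-1.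
Proof.
move=> ef; case: (lerP n.+1%:R^-1 `|f n y|) => [/g_ge fg|]; last first.
  by move/(le_lt_trans ef)/ltW; right.
left; rewrite normg ler_pdivrMr // mulrC; apply: le_trans fg.
by rewrite le_min !ge_min lexx ef orbT.
Qed.

Lemma compare_p : I_p I f <-> I_p I g.
Proof.
split=> h.
  move=> a e e0; have [y <-] := c_surj a.
  by apply: idealS (h y e e0) => n /=; apply: g_le_f.
move=> y e e0.
have e20 : 0 < Num.min e 1 / 2 by rewrite divr_gt0 // lt_min e0 ltr01.
by apply: idealS (idealU (h (c y) _ e20) (ideal_le_inv_succ e0)) => n /=; apply: f_le_g.
Qed.

Lemma compare_sigma_u : I_sigma_u I f <-> I_sigma_u I g.
Proof.
split=> -[X [cov hX]].
  exists (fun k => c @` X k); split.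
    apply/seteqP; split => // a _; have [y <-] := c_surj a.
    have [k _ Xy] : (\bigcup_k X k) y by rewrite -cov.
    by exists k => //; exists y.
  move=> k e e0; apply: idealS (hX k e e0) => n /= [_ [y Xy <-] h].
  by exists y => //; apply: g_le_f.
exists (fun k => c @^-1` X k); split.
  apply/seteqP; split => // y _.
  have [k _ Xy] : (\bigcup_k X k) (c y) by rewrite -cov.
  by exists k.
move=> k e e0.
have e20 : 0 < Num.min e 1 / 2 by rewrite divr_gt0 // lt_min e0 ltr01.
apply: idealS (idealU (hX k _ e20) (ideal_le_inv_succ e0)) => n /= [y Xy].
by case/f_le_g => h; [left; exists (c y)|right].
Qed.

Lemma compare_qn : I_qn I f <-> I_qn I g.
Proof.
split=> -[eps [eps_gt0 [eps0 heps]]].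
  exists eps; split => //; split => // a; have [y <-] := c_surj a.
  by apply: idealS (heps y) => n /=; apply: g_le_f.
(* 2 eps_n absorbs the factor 2 lost by g, and 1/(n+1) covers the n where g_ge does
   not apply. *)
exists (fun n => Num.max (2 * eps n) n.+1%:R^-1); split.
  by move=> n; rewrite lt_max invr_gt0 ltr0n orbT.
split.
  move=> e e0; have e20 : 0 < e / 2 by rewrite divr_gt0.
  apply: idealS (idealU (eps0 _ e20) (ideal_le_inv_succ e0)) => n /=.
  rewrite ger0_norm ?le_max ?invr_ge0 ?ler0n ?orbT // => /orP[h|]; last by right.
  by left; rewrite ger0_norm ?ler_pdivrMr 1?mulrC // ltW.
move=> y; have h20 : (0 : RR) < 1 / 2 by rewrite divr_gt0.
apply: idealS (idealU (heps (c y)) (eps0 _ h20)) => n /=.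
rewrite ge_max => /andP[epsf /g_ge fg].
case: (lerP (1 / 2) (eps n)) => [h|h]; first by right; rewrite ger0_norm // ltW.
left; rewrite normg -(ler_pM2l (_ : 0 < 2)) //; apply: le_trans fg.
by rewrite le_min epsf /=; lra.
Qed.

End Comparison.
End Ideal.

Section Cylinders.
Variable T : discreteTopologicalType.
Local Notation P := (prod_topology (fun _ : nat => T)).

Definition cylinder (z : P) (M : nat) : set P :=
  [set w | forall i, (i < M)%N -> w i = z i].

Lemma cylinder_nbhs (z : P) M : nbhs z (cylinder z M).
Proof.
elim: M => [|M IH]; first by apply: filterS filterT => w _ i.
have -> : cylinder z M.+1 = cylinder z M `&` proj M @^-1` [set z M].
  apply/seteqP; split=> w.
    by move=> h; split; [move=> i iM; apply: h; rewrite ltnS ltnW|apply: h].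
  by move=> [h hM] i; rewrite ltnS leq_eqVlt => /orP[/eqP ->|/h].
apply: filterI IH _; apply: (@proj_continuous nat (fun _ => T) M z).
exact: discrete_set1.
Qed.

Lemma cylinder_invariant_continuous (A : set P) (h : P -> RR) M :
  (forall z w, cylinder z M w -> h w = h z) -> continuous (fun a : set_type A => h (val a)).
Proof.
move=> hM a; have hc : {for val a, continuous h}.
  move=> U /= hU; apply: filterS (cylinder_nbhs (val a) M) => w /hM hw.
  by rewrite /= hw; exact: nbhs_singleton.
exact: continuous_comp (@initial_continuous (set_type A) _ set_val a) hc.
Qed.

End Cylinders.

Lemma set_type_hausdorff (X : topologicalType) (A : set X) :
  hausdorff_space X -> hausdorff_space (set_type A).
Proof.
rewrite !open_hausdorff => hX x y xy.
have /hX[[U V] /=] : val x != val y by rewrite val_eqE.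
rewrite !inE => -[Ux Vy] [oU oV UV0].
exists (val @^-1` U, val @^-1` V); rewrite ?inE //.
split; [by exists U|by exists V|].
by rewrite /= -preimage_setI UV0 preimage_set0.
Qed.

Lemma set_type_normal (R : realType) (X : pseudoMetricType R) (A : set X) :
  hausdorff_space X -> normal_sp (set_type A).
Proof.
move=> hX; split; first exact: set_type_hausdorff.
exact/(normal_openP (R := R))/pseudometric_normal.
Qed.

Definition staircase (b : nat -> bool) (n : nat) : RR :=
  \big[Num.max/0]_(k < n.+1 | b k) k.+1%:R^-1.

Lemma staircase_ge0 b n : 0 <= staircase b n.
Proof. exact: bigmax_ge_id. Qed.

Lemma eq_staircase b b' n : (forall k, (k <= n)%N -> b k = b' k) ->
  staircase b n = staircase b' n.
Proof. by move=> bb'; apply: eq_bigl => k; rewrite bb' // -ltnS. Qed.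

Local Notation inv_succ_le r := (fun k : nat => k.+1%:R^-1 <= r).

Lemma staircase_le (r : RR) n : 0 <= r -> staircase (inv_succ_le r) n <= r.
Proof. by move=> r0; apply: bigmax_le => // k. Qed.

Lemma staircase_ge (r : RR) n : n.+1%:R^-1 <= r ->
  Num.min r 1 <= 2 * staircase (inv_succ_le r) n.
Proof.
move=> rn; have [k rk min_k] := ex_minnP (ex_intro (inv_succ_le r) n rn).
have kn : (k < n.+1)%N by rewrite ltnS min_k.
have ks : k.+1%:R^-1 <= staircase (inv_succ_le r) n.
  exact: (@le_bigmax_cond _ _ _ 0 (Ordinal kn) _ (fun i : 'I_n.+1 => i.+1%:R^-1) rk).
rewrite ge_min; apply/orP; case: k => [|k] in rk min_k kn ks *.
  by right; rewrite invr1 in ks; lra.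
have rk' : r < k.+1%:R^-1 by rewrite ltNge; apply/negP => /min_k; rewrite ltnn.
have half : k.+1%:R^-1 <= 2 * (k.+2%:R^-1 : RR).
  rewrite -[leLHS]mul1r ler_pdivrMr ?ltr0n // mulrAC ler_pdivlMr ?ltr0n // mul1r.
  by rewrite -natrM ler_nat; lia.
by left; apply: le_trans (ltW rk') (le_trans half _); rewrite ler_pM2l.
Qed.

Definition tri_index (n k : nat) : nat := (n * n + k)%N.

Lemma tri_index_inj n k n' k' : (k <= n)%N -> (k' <= n')%N ->
  tri_index n k = tri_index n' k' -> n = n' /\ k = k'.
Proof.
rewrite /tri_index => kn kn' e.
have nn' : n = n' by nia.
by split=> //; move: e; rewrite nn'; lia.
Qed.

Definition basic_mode (I : set (set nat)) (m : conv_mode) : Prop :=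
  m = mode_p I \/ m = mode_sigma_u I \/ m = mode_qn I.

Section Coding.
Variables (T : discreteTopologicalType) (t0 t1 : T).
Hypothesis t01 : t0 != t1.
Local Notation P := (prod_topology (fun _ : nat => T)).
Variables (Y : Type) (f : nat -> Y -> RR).

Definition code (y : Y) : P := fun j =>
  if `[< exists n k, [/\ j = tri_index n k, (k <= n)%N & k.+1%:R^-1 <= `|f n y|] >]
  then t1 else t0.

Definition decode (z : P) (n : nat) : RR :=
  staircase (fun k => z (tri_index n k) == t1) n.

Lemma decode_code n y : decode (code y) n = staircase (inv_succ_le `|f n y|) n.
Proof.
apply: eq_staircase => k kn; rewrite /code; case: asboolP => [|nex].
  case=> n' [k' [e kn' fk']]; move: fk'; have [<- <-] := tri_index_inj kn kn' e.
  by rewrite eqxx => ->.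
rewrite (negbTE t01); apply/esym/negP => fk; apply: nex.
by exists n, k.
Qed.

Local Notation S := (set_type (range code)).

Lemma decode_continuous n : continuous (fun a : S => decode (val a) n).
Proof.
apply: (@cylinder_invariant_continuous _ _ (decode^~ n) (n.+1 * n.+1)) => z w zw.
apply: eq_staircase => k kn; rewrite zw // /tri_index; nia.
Qed.

Lemma coding (I : set (set nat)) : is_ideal I ->
  exists A : set P, exists g : nat -> set_type A -> RR,
  [/\ (forall n, continuous (g n)),
      (forall m, basic_mode I m -> (m Y f <-> m (set_type A) g)) &
      exists h : set_type A -> Y, injective h].
Proof.
move=> hI; pose c y : S := exist _ (code y) (mem_set (imageT code y)).
have c_surj (a : S) : exists y, c y = a.
  by case: a => z zA; have [y _ yz] := set_mem zA; exists y; apply: val_inj.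
exists (range code), (fun n a => decode (val a) n); split.
- exact: decode_continuous.
- have g_ge0 n y : 0 <= decode (val (c y)) n by rewrite decode_code staircase_ge0.
  have g_le n y : decode (val (c y)) n <= `|f n y|.
    by rewrite decode_code staircase_le.
  have g_ge n y : n.+1%:R^-1 <= `|f n y| -> Num.min `|f n y| 1 <= 2 * decode (val (c y)) n.
    by rewrite decode_code; apply: staircase_ge.
  move=> m [->|[->|->]].
  + exact: compare_p c_surj g_ge0 g_le g_ge.
  + exact: compare_sigma_u c_surj g_ge0 g_le g_ge.
  + exact: compare_qn c_surj g_ge0 g_le g_ge.
- have [h hK] := choice c_surj.
  by exists h => a b e; rewrite -(hK a) -(hK b) e.
Qed.
End Coding.

Section MinimalCardinality.
Variables (U J : Type) (X : J -> set U).

Definition disjoint_selectors (F : set (J -> U)) : Prop :=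
  (forall s, F s -> forall j, X j (s j)) /\
  (forall s t, F s -> F t -> s <> t -> forall j, s j <> t j).

Lemma maximal_disjoint_selectors : exists F, disjoint_selectors F /\
  forall F', F `<` F' -> ~ disjoint_selectors F'.
Proof.
apply: Zorn_bigcup => C dC totC; split; first by move=> s [F CF Fs]; apply: (dC F CF).1.
move=> s t [F CF Fs] [G CG Gt].
by have [FG|GF] := totC F G CF CG; [apply: (dC G CG).2 (FG s Fs) Gt|
  apply: (dC F CF).2 Fs (GF t Gt)].
Qed.

Lemma maximal_disjoint_selectors_cover (j0 : J) F : disjoint_selectors F ->
  (forall F', F `<` F' -> ~ disjoint_selectors F') ->
  exists j, forall b, X j b -> exists2 s, F s & s j = b.
Proof.
move=> [FX Fdisj] Fmax; apply: contrapT => /forallNP nocover.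
(* Otherwise a selector avoiding all members of F could be added to F. *)
have /choice[t ht] : forall j, exists b, X j b /\ forall s, F s -> s j <> b.
  move=> j; have /existsNP[b] := nocover j.
  move=> /not_implyP[Xb nob]; exists b; split=> // s Fs sb.
  by apply: nob; exists s.
apply: (Fmax (F `|` [set t])).
  rewrite properEneq; split; last by move=> s Fs; left.
  apply/eqP => eFt; have : (F `|` [set t]) t by right.
  by rewrite -eFt => /(ht j0).2; apply.
split; first by move=> s [/FX //|->] j; case: (ht j).
move=> s s' [Fs|->] [Fs'|->] ss' j.
- exact: Fdisj.
- exact: (ht j).2.
- by move/esym; apply: (ht j).2.
- by [].
Qed.

Lemma exists_min_card (j0 : J) : exists j, forall i,
  exists g : set_type (X j) -> set_type (X i), injective g.
Proof.
have [F [dF Fmax]] := maximal_disjoint_selectors.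
have [j hj] := maximal_disjoint_selectors_cover j0 dF Fmax.
exists j => i; have [FX Fdisj] := dF.
have /choice[sel hsel] : forall b : set_type (X j), exists s, F s /\ s j = val b.
  by move=> b; have [s Fs sb] := hj _ (set_mem (valP b)); exists s.
have selX b : sel b i \in X i by apply/mem_set/FX; case: (hsel b).
exists (fun b => exist _ (sel b i) (selX b)) => b b' /(congr1 val) /= bb'.
apply: val_inj; rewrite -(hsel b).2 -(hsel b').2; congr (_ j).
by apply: contrapT => /(Fdisj _ _ (hsel b).1 (hsel b').1)/(_ i).
Qed.

End MinimalCardinality.

Definition class_witness (al be : conv_mode) (X : topologicalType) (f : nat -> X -> RR) :=
  (forall n, continuous (f n)) /\ ~ (al X f <-> be X f).

Lemma not_in_classP (al be : conv_mode) (X : topologicalType) : normal_sp X ->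
  ~ in_class al be X <-> exists f : nat -> X -> RR, class_witness al be f.
Proof.
move=> nX; split; last by case=> f [fc nf] [_ /(_ f fc)].
move=> nc; apply: contrapT => /forallNP nw; apply: nc; split=> // f fc.
by apply: contrapT => nf; apply: (nw f).
Qed.

Section Realization.
Variables (T : discretePseudoMetricType RR) (t0 t1 : T).
Hypothesis t01 : t0 != t1.
Local Notation P := (prod_topology (fun _ : nat => T)).

Lemma set_type_prod_normal (A : set P) : normal_sp (set_type A).
Proof.
by apply: (@set_type_normal RR); apply: hausdorff_product => _; exact: discrete_hausdorff.
Qed.

Lemma realizes_non_of_witness (I : set (set nat)) (al be : conv_mode) :
  is_ideal I -> basic_mode I al -> basic_mode I be ->
  (exists (A : set P) (f : nat -> set_type A -> RR), class_witness al be f) ->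
  exists A : set P, realizes_non al be (set_type A).
Proof.
move=> hI bal bbe [A0 [f0 wf0]].
pose outside : set (set P) := [set A | ~ in_class al be (set_type A)].
have outA0 : outside A0 by apply/(not_in_classP _ _ (set_type_prod_normal A0)); exists f0.
have [[A outA] minA] := exists_min_card (fun A : set_type outside => val A)
  (exist _ A0 (mem_set outA0)).
exists A; split; first exact: set_type_prod_normal.
split; first exact: set_mem outA.
move=> Y nY /(not_in_classP _ _ nY)[f [fc nf]].
have [B [g [gc fg [h hinj]]]] := coding t01 f hI.
have outB : outside B.
  apply/(not_in_classP _ _ (set_type_prod_normal B)); exists g; split=> //.
  by rewrite -(fg _ bal) -(fg _ bbe).
have [k kinj] := minA (exist _ B (mem_set outB)).
by exists (h \o k) => a b /= /hinj/kinj.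
Qed.

End Realization.

Definition ideal_divergent (I : set (set nat)) : set baire_space :=
  [set x | forall K, I [set n | (x n <= K)%N]].

Definition ideal_indicators (I : set (set nat)) : set cantor_space :=
  [set x | I [set n | x n]].

Section Examples.
Variable I : set (set nat).
Hypothesis hI : is_ideal I.

Section Divergent.
Local Notation D := (baire_sub (ideal_divergent I)).

Definition inv_succ_coord n (a : D) : RR := (val a n).+1%:R^-1.

Lemma inv_succ_coord_norm n a : `|inv_succ_coord n a| = inv_succ_coord n a.
Proof. by rewrite gtr0_norm // invr_gt0 ltr0n. Qed.

Lemma inv_succ_coord_continuous n : continuous (inv_succ_coord n).
Proof.
by apply: (@cylinder_invariant_continuous _ _ (fun z => (z n).+1%:R^-1) n.+1) => z w ->.
Qed.

Lemma inv_succ_coord_p : I_p I inv_succ_coord.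
Proof.
move=> a e e0; have aD : ideal_divergent I (val a) by exact: set_mem (valP a).
apply: (idealS hI _ (aD (Num.truncn e^-1))) => n /=.
by rewrite inv_succ_coord_norm => /(lt_truncn_inv e0)/ltnW.
Qed.

Lemma inv_succ_coord_not_sigma_u : ~ I_sigma_u I inv_succ_coord.
Proof.
case=> X [cov unifX].
have inv_gt0 k : 0 < k.+1%:R^-1 :> RR by rewrite invr_gt0 ltr0n.
have [m mP] := ideal_avoid_seq hI (fun k => unifX k _ (inv_gt0 k)).
have m_unbounded n : exists j, (n <= m j)%N by exists n; case: (mP n).
pose x : baire_space := fun n => ex_minn (m_unbounded n).
have x_le k : (x (m k) <= k)%N by rewrite /x; case: ex_minnP => j _; apply.
have xD : ideal_divergent I x.
  move=> K; apply: (ideal_finite hI).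
  apply: sub_finite_set (finite_II (\max_(j < K.+1) m j).+1) => n /=.
  rewrite /x ltnS; case: ex_minnP => j nj _ jK; apply: leq_trans nj _.
  exact: (@leq_bigmax _ (fun i : 'I_K.+1 => m i) (Ordinal (jK : (j < K.+1)%N))).
pose a : D := exist _ x (mem_set xD).
(* a would have to lie in some X k, but f_(m k) a >= 1/(k+1) and m k is not in the
   set where f >= 1/(k+1) somewhere on X k. *)
have [k _ Xka] : (\bigcup_k X k) a by rewrite -cov.
apply: (mP k).2; exists a => //.
by rewrite inv_succ_coord_norm lef_pV2 ?posrE ?ltr0n // ler_nat ltnS x_le.
Qed.

Lemma inv_succ_coord_not_qn : ~ I_qn I inv_succ_coord.
Proof.
case=> eps [eps_gt0 [eps0 heps]].
(* x n + 1 is the integer part of 1/eps_n, so that f_n x >= eps_n whenever eps_n < 1. *)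
pose x : baire_space := fun n => (Num.truncn (eps n)^-1).-1.
have xD : ideal_divergent I x.
  move=> K; apply: (idealS hI _ (eps0 K.+2%:R^-1 _)); last by rewrite invr_gt0 ltr0n.
  move=> n /= xnK; have : (Num.truncn (eps n)^-1 <= K.+1)%N.
    by move: xnK; rewrite /x; case: Num.truncn.
  rewrite truncn_le_nat gtr0_norm // => epsK.
  by rewrite -[eps n]invrK lef_pV2 ?posrE ?invr_gt0 ?ltr0n // ltW.
pose a : D := exist _ x (mem_set xD).
apply: (idealNT hI); apply: (idealS hI _ (idealU hI (heps a) (eps0 1 ltr01))) => n _ /=.
rewrite inv_succ_coord_norm gtr0_norm //; case: (lerP 1 (eps n)) => [|eps1]; [by right|left].
have trunc_gt0 : (0 < Num.truncn (eps n)^-1)%N.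
  by rewrite truncn_gt0 -invr1 lef_pV2 ?posrE ?ltr01 // ltW.
rewrite /inv_succ_coord /= /x prednK // -[leLHS]invrK lef_pV2 ?posrE ?invr_gt0 ?ltr0n //.
by rewrite truncn_le invr_ge0 ltW.
Qed.

End Divergent.

Section Indicators.
Local Notation C := (cantor_sub (ideal_indicators I)).

Definition coord (n : nat) (a : C) : RR := (val a n)%:R.

Lemma coord_norm n a : `|coord n a| = coord n a.
Proof. by rewrite ger0_norm ?ler0n. Qed.

Lemma coord_continuous n : continuous (coord n).
Proof.
apply: (@cylinder_invariant_continuous _ (ideal_indicators I) (fun z => (z n : nat)%:R) n.+1).
by move=> z w ->.
Qed.

Lemma coord_qn : I_qn I coord.
Proof.
exists (fun n => n.+1%:R^-1); split; first by move=> n; rewrite invr_gt0 ltr0n.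
split.
  move=> e e0; apply: (idealS hI _ (ideal_le_inv_succ hI e0)) => n /=.
  by rewrite ger0_norm // invr_ge0 ler0n.
case=> x xC; apply: (idealS hI _ (set_mem xC)) => n /=.
by rewrite coord_norm /coord /=; case: (x n); rewrite //= leNgt invr_gt0 ltr0n.
Qed.

Lemma coord_sigma_u_countably_generated : I_sigma_u I coord -> countably_generated I.
Proof.
case=> X [cov unifX].
exists (fun k => [set n | exists2 a, X k a & 1 <= `|coord n a|]); split.
  by move=> k; apply: unifX; rewrite ltr01.
move=> B IB; pose x : cantor_space := fun n => `[< B n >].
have xC : ideal_indicators I x by apply: (idealS hI _ IB) => n /asboolP.
pose a : C := exist _ x (mem_set xC).
have [k _ Xka] : (\bigcup_k X k) a by rewrite -cov.
exists k => n Bn; exists a => //.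
by rewrite coord_norm /coord /= /x asboolT.
Qed.

End Indicators.
End Examples.

Theorem theorem8p2 (I : set (set nat)) (hI : is_ideal I) :
  (exists A : set baire_space,
      realizes_non (mode_p I) (mode_sigma_u I) (baire_sub A)) /\
  (~ countably_generated I ->
    exists A : set cantor_space,
      realizes_non (mode_qn I) (mode_sigma_u I) (cantor_sub A)) /\
  (exists A : set baire_space,
      realizes_non (mode_p I) (mode_qn I) (baire_sub A)).
Proof.
have p : basic_mode I (mode_p I) by left.
have sigma_u : basic_mode I (mode_sigma_u I) by right; left.
have qn : basic_mode I (mode_qn I) by right; right.
split; [|split].
- apply: (realizes_non_of_witness (isT : 0%N != 1%N) hI p sigma_u).
  exists (ideal_divergent I), (@inv_succ_coord I).
  split; first exact: inv_succ_coord_continuous.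
  by case=> /(_ (inv_succ_coord_p hI))/(inv_succ_coord_not_sigma_u hI).
- move=> ncg; apply: (realizes_non_of_witness (isT : false != true) hI qn sigma_u).
  exists (ideal_indicators I), (@coord I); split; first exact: coord_continuous.
  by case=> /(_ (coord_qn hI))/(coord_sigma_u_countably_generated hI).
- apply: (realizes_non_of_witness (isT : 0%N != 1%N) hI p qn).
  exists (ideal_divergent I), (@inv_succ_coord I).
  split; first exact: inv_succ_coord_continuous.
  by case=> /(_ (inv_succ_coord_p hI))/(inv_succ_coord_not_qn hI).
Qed.
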